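(* Consider the signals $u_{MPC}$, $\hat u_{MPC}$, $\alpha_{MPC}$ defined in the context along a trajectory of the closed-loop system. Then for every sampling time $t=\Delta^j$, $j\in\mathbb{N}$, $\hat u_{MPC}(\Delta^j)=\hat u^*(\hat P^{fcst}_j,f(\Delta^j),\omega(\Delta^j),\alpha_{MPC}(\Delta^j))$ is a (globally) Lipschitz function of the sampled state $(f(\Delta^j),\omega(\Delta^j),\alpha_{MPC}(\Delta^j))$ (together with the forecast $\hat P^{fcst}_j$). Additionally, $\alpha_{MPC,i}(t)\hat u_{MPC,i}(t)\leqslant\epsilon_i\alpha_{MPC,i}^2(t)$ for all $t\geqslant0$ and all $i\in\mathcal{I}$.
   Context: Setting: $\mathcal{G}=(\mathcal{I},\mathcal{E})$ is a connected undirected graph with $\mathcal{I}=\{1,\dots,n\}$, $\mathcal{E}=\{e_1,\dots,e_m\}$, fixed orientation and incidence matrix $D\in\mathbb{R}^{m\times n}$; $M=\mathrm{diag}(M_i)$, $E=\mathrm{diag}(E_i)$ with $M_i,E_i>0$; $Y_b\in\mathbb{R}^{m\times m}$ diagonal with positive entries; $\mathcal{I}_\omega\subseteq\mathcal{I}_u\subseteq\mathcal{I}$; $\mathbb{A}=\{y\in\mathbb{R}^n: y_w=0\ \forall w\notin\mathcal{I}_u\}$. The network dynamics are $\dot f=Y_bD\omega$, $M\dot\omega=-E\omega-D^Tf+p(t)+\alpha(t)$ with $\alpha(t)\in\mathbb{A}$. Parameters: $T,\tilde t>0$, $N=\lceil\tilde t/T\rceil$, $c_i,\epsilon_i,T_i>0$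 ($i\in\mathcal{I}_u$), $d>0$, $\underline\omega_i<\bar\omega_i$ ($i\in\mathcal{I}_\omega$). For $\hat P=[\hat p(0),\dots,\hat p(N-1)]\in\mathbb{R}^{n\times N}$, $f_0\in\mathbb{R}^m$, $\omega_0\in\mathbb{R}^n$, $a_0\in\mathbb{A}$, let $\hat u^*(\hat P,f_0,\omega_0,a_0)$ denote the $\hat u$-component of the (unique) optimal solution of the problem: minimize $\sum_{i\in\mathcal{I}_u}c_i\hat u_i^2+d\beta^2$ over $\hat f(k)\in\mathbb{R}^m,\hat\omega(k),\hat\alpha(k)\in\mathbb{R}^n$ ($k=0..N$), $\hat u\in\mathbb{R}^n$, $\beta\in\mathbb{R}$, subject to, for $k=0,\dots,N-1$: $\hat f(k+1)=\hat f(k)+TY_bD\hat\omega(k)$; $M\hat\omega(k+1)=M\hat\omega(k)+T(-E\hat\omega(k)-D^T\hat f(k)+\hat p(k)+\hat u)$; $\hat\alpha_i(k+1)=\hat\alpha_i(k)+T(-\hat\alpha_i(k)/T_i-\hat\omega_i(k)+\hat u_i)$ for $i\in\mathcal{I}_u$; $\hat\alpha_i\equiv0$ for $i\notin\mathcal{I}_u$; $\hat u\in\mathbb{A}$; $\hat f(0)=f_0,\hat\omega(0)=\omega_0,\hat\alpha(0)=a_0$; $\underline\omega_i-\beta\leqslant\hat\omega_i(k+1)\leqslant\bar\omega_i+\beta$ for $i\in\mathcal{I}_\omega$; $|\hat u_i|\leqslant\epsilon_i|a_{0,i}|$ for $i\in\mathcal{I}_u$. Sampling times $0=\Delta^0<\Delta^1<\cdots$;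 at each $\Delta^j$ a piece-wise continuous forecast $p^{fcst}_{\Delta^j}:[\Delta^j,\Delta^j+\tilde t]\to\mathbb{R}^n$ is given and $\hat P^{fcst}_j=[p^{fcst}_{\Delta^j}(\Delta^j+kT)]_{k=0}^{N-1}$. The MPC output is $u_{MPC}(t)=\hat u^*(\hat P^{fcst}_j,f(\Delta^j),\omega(\Delta^j),\alpha_{MPC}(\Delta^j))$ for $t\in[\Delta^j,\Delta^{j+1})$. The stability filter is $\hat u_{MPC,i}(t)=\mathrm{sat}(u_{MPC,i}(t);\epsilon_i|\alpha_{MPC,i}(t)|,-\epsilon_i|\alpha_{MPC,i}(t)|)$, where $\mathrm{sat}(a;b,-b)=\max\{-b,\min\{b,a\}\}$ for $b\geqslant 0$ (with $\epsilon_i$ taken as any positive value, e.g. $1$, for $i\notin\mathcal{I}_u$, where all quantities vanish). The low-pass filter is $\dot\alpha_{MPC,i}=-\alpha_{MPC,i}/T_i-\omega_i+\hat u_{MPC,i}$ for $i\in\mathcal{I}_u$ and $\alpha_{MPC,i}\equiv0$ for $i\notin\mathcal{I}_u$. *)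

From HB Require Import structures.
From mathcomp Require Import all_boot all_order all_algebra.
From mathcomp Require Import all_classical all_reals all_analysis.
Set Implicit Arguments. Unset Strict Implicit. Unset Printing Implicit Defensive.
Import Order.TTheory GRing.Theory Num.Theory.
Import numFieldNormedType.Exports.
Local Open Scope classical_set_scope.
Local Open Scope ring_scope.

Section Defs.
Variable R : realType.

Definition incidence_matrix (m n : nat) (D : 'M[R]_(m, n)) : Prop :=
  forall e : 'I_m, exists i j : 'I_n,
    i != j /\ D e i = 1 /\ D e j = -1 /\
    (forall k, k != i -> k != j -> D e k = 0).

Definition graph_adj (m n : nat) (D : 'M[R]_(m, n)) : rel 'I_n :=
  fun i j => [exists e : 'I_m, (D e i != 0) && (D e j != 0)].

Definition graph_connected (m n : nat) (D : 'M[R]_(m, n)) : Prop :=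
  forall i j : 'I_n, connect (graph_adj D) i j.

Definition inA (n : nat) (Iu : {set 'I_n}) (y : 'cV[R]_n) : Prop :=
  forall w : 'I_n, w \notin Iu -> y w 0 = 0.

(* sup norm on matrices (all norms on finite-dim spaces are equivalent) *)
Definition mxnorm (p q : nat) (A : 'M[R]_(p, q)) : R :=
  \big[Num.max/0]_(i < p) \big[Num.max/0]_(j < q) `|A i j|.

Definition sat (a b : R) : R := Num.max (- b) (Num.min b a).

(* Diagonal matrices M, E, Y_b are given by their diagonals (row vectors).
   Trajectory variables fh(k), wh(k), ah(k) (k = 0..N) are the columns of
   F : 'M_(m, N.+1), W, Aa : 'M_(n, N.+1); the forecast is P : 'M_(n, N). *)
Definition mpc_feasible (m n N : nat) (D : 'M[R]_(m, n))
  (Mr Er : 'rV[R]_n) (Yr : 'rV[R]_m) (Iu Iw : {set 'I_n})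
  (T : R) (eps Ti wlo whi : 'cV[R]_n)
  (P : 'M[R]_(n, N)) (f0 : 'cV[R]_m) (w0 a0 : 'cV[R]_n)
  (F : 'M[R]_(m, N.+1)) (W Aa : 'M[R]_(n, N.+1)) (u : 'cV[R]_n) (beta : R)
  : Prop :=
  (forall k : 'I_N,
        col (inord k.+1) F = col (inord k) F
                             + T *: (diag_mx Yr *m D *m col (inord k) W)) /\
      (forall k : 'I_N,
        diag_mx Mr *m col (inord k.+1) W =
          diag_mx Mr *m col (inord k) W
          + T *: (- (diag_mx Er *m col (inord k) W) - D^T *m col (inord k) F
                  + col k P + u)) /\
      (forall (k : 'I_N) (i : 'I_n), i \in Iu ->
        Aa i (inord k.+1) = Aa i (inord k)
                            + T * (- (Aa i (inord k) / Ti i 0) - W i (inord k) + u i 0)) /\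
      (forall (k : 'I_N.+1) (i : 'I_n), i \notin Iu -> Aa i k = 0) /\
      inA Iu u /\
      [/\ col 0 F = f0, col 0 W = w0 & col 0 Aa = a0] /\
      (forall (k : 'I_N) (i : 'I_n), i \in Iw ->
        wlo i 0 - beta <= W i (inord k.+1) <= whi i 0 + beta) /\
    (forall i : 'I_n, i \in Iu -> `|u i 0| <= eps i 0 * `|a0 i 0|).

Definition mpc_cost (n : nat) (Iu : {set 'I_n}) (c : 'cV[R]_n) (d : R)
  (u : 'cV[R]_n) (beta : R) : R :=
  \sum_(i in Iu) c i 0 * (u i 0) ^+ 2 + d * beta ^+ 2.

Definition mpc_optimal (m n N : nat) (D : 'M[R]_(m, n))
  (Mr Er : 'rV[R]_n) (Yr : 'rV[R]_m) (Iu Iw : {set 'I_n})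
  (T : R) (c eps Ti wlo whi : 'cV[R]_n) (d : R)
  (P : 'M[R]_(n, N)) (f0 : 'cV[R]_m) (w0 a0 : 'cV[R]_n)
  (F : 'M[R]_(m, N.+1)) (W Aa : 'M[R]_(n, N.+1)) (u : 'cV[R]_n) (beta : R)
  : Prop :=
  mpc_feasible D Mr Er Yr Iu Iw T eps Ti wlo whi P f0 w0 a0 F W Aa u beta /\
  forall F' W' Aa' u' beta',
    mpc_feasible D Mr Er Yr Iu Iw T eps Ti wlo whi P f0 w0 a0 F' W' Aa' u' beta' ->
    mpc_cost Iu c d u beta <= mpc_cost Iu c d u' beta'.

(* u-hat-star: the u-component of the (unique) optimal solution;
   chosen by xget, default 0 if no optimal solution exists. *)
Definition uhat_star (m n N : nat) (D : 'M[R]_(m, n))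
  (Mr Er : 'rV[R]_n) (Yr : 'rV[R]_m) (Iu Iw : {set 'I_n})
  (T : R) (c eps Ti wlo whi : 'cV[R]_n) (d : R)
  (P : 'M[R]_(n, N)) (f0 : 'cV[R]_m) (w0 a0 : 'cV[R]_n) : 'cV[R]_n :=
  xget 0 [set u | exists F W Aa beta,
            mpc_optimal D Mr Er Yr Iu Iw T c eps Ti wlo whi d P f0 w0 a0 F W Aa u beta].

Definition forecast_mx (n N : nat) (T Delta : R) (pf : R -> 'cV[R]_n) : 'M[R]_(n, N) :=
  \matrix_(i < n, k < N) pf (Delta + k%:R * T) i 0.

(* x solves x' = g on [0, +oo) in the Caratheodory (integral) sense *)
Definition solves_ode (g x : R -> R) : Prop :=
  forall t : R, 0 <= t ->
    (lebesgue_measure : set R -> \bar R).-integrable `[0, t] (EFin \o g) /\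
    x t = x 0 + \int[lebesgue_measure]_(s in `[0, t]) g s.

End Defs.

From HB Require Import structures.
From mathcomp Require Import all_boot all_order all_algebra.
From mathcomp Require Import all_classical all_reals all_analysis.
From mathcomp Require Import ring lra.
Import Order.TTheory GRing.Theory Num.Theory.
Import numFieldNormedType.Exports.
Local Open Scope classical_set_scope.
Local Open Scope ring_scope.
Set Implicit Arguments. Unset Strict Implicit. Unset Printing Implicit Defensive.

(* The control law [uhat_star] is the minimiser of a quadratic program in
   [z = (beta, u)] with positive diagonal weights.  Unrolling the Euler scheme,
   every predicted frequency is the free response (linear in the forecast and
   the sampled state) plus a fixed linear function of [u], so all constraints
   are [dotr z a_j <= b_j] with right-hand sides [b] Lipschitz in the data.
   The minimiser of such a program is Lipschitz in [b], by induction on the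
   number of inequality constraints: the base case is an equality-constrained
   least-squares problem, with a linear solution operator; the step splits on
   whether the extra constraint is active at either end, and in the mixed case
   the intermediate value theorem finds the point of the segment of
   right-hand sides where it becomes active.  The remaining claims
   only use that the optimal [u] satisfies [|u_i| <= eps_i |alpha_i|] and that
   [|sat y (e |x|)| <= e |x|]. *)

Section SupNorms.
Variable R : realType.
Implicit Types (p q r : nat).

Lemma le_mxnorm p q (A : 'M[R]_(p, q)) i j : `|A i j| <= mxnorm A.
Proof. exact: le_trans (le_bigmax _ _ j) (le_bigmax _ _ i). Qed.

Lemma mxnorm_le p q (A : 'M[R]_(p, q)) c :
  0 <= c -> (forall i j, `|A i j| <= c) -> mxnorm A <= c.
Proof. by move=> c0 Ac; apply: bigmax_le => // i _; apply: bigmax_le. Qed.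

Lemma mxnorm_ge0 p q (A : 'M[R]_(p, q)) : 0 <= mxnorm A.
Proof. exact: bigmax_ge_id. Qed.

Lemma mxnormD p q (A B : 'M[R]_(p, q)) : mxnorm (A + B) <= mxnorm A + mxnorm B.
Proof.
apply: mxnorm_le => [|i j]; first by rewrite addr_ge0 ?mxnorm_ge0.
by rewrite mxE (le_trans (ler_normD _ _)) // lerD ?le_mxnorm.
Qed.

Lemma mxnormZ p q (A : 'M[R]_(p, q)) t : mxnorm (t *: A) <= `|t| * mxnorm A.
Proof.
apply: mxnorm_le => [|i j]; first by rewrite mulr_ge0 ?mxnorm_ge0.
by rewrite mxE normrM ler_wpM2l ?le_mxnorm.
Qed.

Lemma mxnormN p q (A : 'M[R]_(p, q)) : mxnorm (- A) = mxnorm A.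
Proof. by apply: eq_bigr => i _; apply: eq_bigr => j _; rewrite mxE normrN. Qed.

Lemma mxnormBC p q (A B : 'M[R]_(p, q)) : mxnorm (A - B) = mxnorm (B - A).
Proof. by rewrite -mxnormN opprB. Qed.

Lemma mxnormB_le p q (A B C : 'M[R]_(p, q)) :
  mxnorm (A - C) <= mxnorm (A - B) + mxnorm (B - C).
Proof. by apply: le_trans (mxnormD _ _); rewrite addrA subrK. Qed.

Definition mxnorm1 p q (A : 'M[R]_(p, q)) : R := \sum_i \sum_j `|A i j|.

Lemma mxnorm1_ge0 p q (A : 'M[R]_(p, q)) : 0 <= mxnorm1 A.
Proof. by apply: sumr_ge0 => i _; apply: sumr_ge0. Qed.

Lemma mxnormMl p q r (A : 'M[R]_(p, q)) (B : 'M[R]_(q, r)) :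
  mxnorm (A *m B) <= mxnorm1 A * mxnorm B.
Proof.
apply: mxnorm_le => [|i j]; first by rewrite mulr_ge0 ?mxnorm1_ge0 ?mxnorm_ge0.
rewrite mxE (le_trans (ler_norm_sum _ _ _)) //.
apply: le_trans (_ : \sum_k `|A i k| * mxnorm B <= _).
  by apply: ler_sum => k _; rewrite normrM ler_wpM2l ?le_mxnorm.
rewrite -mulr_suml ler_wpM2r ?mxnorm_ge0 // /mxnorm1 (bigD1 i) //= lerDl.
by apply: sumr_ge0 => i' _; apply: sumr_ge0.
Qed.

Lemma mxnormMr p q r (A : 'M[R]_(p, q)) (B : 'M[R]_(q, r)) :
  mxnorm (A *m B) <= mxnorm A * mxnorm1 B.
Proof.
apply: mxnorm_le => [|i j]; first by rewrite mulr_ge0 ?mxnorm1_ge0 ?mxnorm_ge0.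
rewrite mxE (le_trans (ler_norm_sum _ _ _)) //.
apply: le_trans (_ : \sum_k mxnorm A * `|B k j| <= _).
  by apply: ler_sum => k _; rewrite normrM ler_wpM2r ?le_mxnorm.
rewrite -mulr_sumr ler_wpM2l ?mxnorm_ge0 // /mxnorm1 exchange_big (bigD1 j) //= lerDl.
by apply: sumr_ge0 => j' _; apply: sumr_ge0.
Qed.

Definition supn (I : finType) (b : I -> R) : R := \big[Num.max/0]_j `|b j|.

Lemma le_supn (I : finType) (b : I -> R) j : `|b j| <= supn b.
Proof. exact: le_bigmax. Qed.

Lemma supn_le (I : finType) (b : I -> R) c :
  0 <= c -> (forall j, `|b j| <= c) -> supn b <= c.
Proof. by move=> c0 bc; apply: bigmax_le. Qed.

Lemma supn_ge0 (I : finType) (b : I -> R) : 0 <= supn b.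
Proof. exact: bigmax_ge_id. Qed.

Lemma supnBC (I : finType) (b1 b2 : I -> R) :
  supn (fun j => b1 j - b2 j) = supn (fun j => b2 j - b1 j).
Proof. by apply: eq_bigr => j _; rewrite distrC. Qed.

Lemma supn_scale (I : finType) (b g : I -> R) c :
  (forall j, b j = c * g j) -> supn b <= `|c| * supn g.
Proof.
move=> bE; apply: supn_le => [|j]; first by rewrite mulr_ge0 ?supn_ge0.
by rewrite bE normrM ler_wpM2l ?le_supn.
Qed.

End SupNorms.

Section UnitInterval.
Variable R : realType.

Definition clamp01 (t : R) : R := if t < 0 then 0 else if 1 < t then 1 else t.

Lemma clamp01_itv t : clamp01 t \in `[0, 1].
Proof.
rewrite in_itv /= /clamp01; case: ltP => [|t0]; first by rewrite lexx ler01.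
by case: ltP => [|t1]; rewrite ?ler01 ?lexx ?t0.
Qed.

Lemma clamp01_id t : t \in `[0, 1] -> clamp01 t = t.
Proof. by rewrite in_itv /= => /andP[t0 t1]; rewrite /clamp01 ltNge t0 ltNge t1. Qed.

Lemma clamp01_lip t s : `|clamp01 t - clamp01 s| <= `|t - s|.
Proof.
have := ler_norm (t - s); have := ler_norm (s - t); rewrite distrC ler_norml /clamp01.
by case: (ltP t 0); case: (ltP s 0); case: (ltP 1 t); case: (ltP 1 s) => /=; lra.
Qed.

Lemma lipschitz_continuous (f : R -> R) K :
  0 <= K -> (forall u v, `|f u - f v| <= K * `|u - v|) -> continuous f.
Proof.
move=> K0 fK x; apply/cvgrPdist_le => e e0.
have K1 : 0 < K + 1 by rewrite ltr_wpDl.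
near=> t; apply: le_trans (fK x t) _.
near: t; apply/nbhs_normP; exists (e / (K + 1)); first by rewrite /= divr_gt0.
move=> t /= xt; apply: le_trans (_ : K * (e / (K + 1)) <= e).
  by rewrite ler_wpM2l // ltW.
by rewrite mulrA ler_pdivrMr //; nra.
Unshelve. all: by end_near.
Qed.

(* Composing with [clamp01] extends [f] from [0, 1] to a Lipschitz map on R. *)
Lemma lipschitz01_continuous (f : R -> R) K : 0 <= K ->
  {in `[0, 1] &, forall u v, `|f u - f v| <= K * `|u - v|} ->
  {within `[0, 1], continuous f}.
Proof.
move=> K0 fK.
have fcK : continuous (f \o clamp01).
  apply: (lipschitz_continuous K0) => u v /=.
  apply: le_trans (fK _ _ (clamp01_itv u) (clamp01_itv v)) _.
  by rewrite ler_wpM2l // clamp01_lip.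
apply: (@subspace_eq_continuous _ _ _ (f \o clamp01)); last exact: continuous_subspaceT.
by move=> t; rewrite inE /= => t01; rewrite clamp01_id.
Qed.

End UnitInterval.

Section QuadraticProgram.
Variables (R : realType) (p : nat) (h : 'rV[R]_p).
Hypothesis h_gt0 : forall l, 0 < h 0 l.
Variables (I : finType) (a : I -> 'rV[R]_p).
Implicit Types (x y z v : 'rV[R]_p) (b : I -> R) (S Q : {set I}) (t : R).

Definition dotr x y : R := \sum_l x 0 l * y 0 l.

Definition qform z : R := \sum_l h 0 l * z 0 l ^+ 2.

Definition qp_feasible S Q b z : Prop :=
  (forall j, j \in S -> dotr z (a j) <= b j) /\
  (forall j, j \in Q -> dotr z (a j) = b j).

Definition qp_optimal S Q b z : Prop :=
  qp_feasible S Q b z /\ forall y, qp_feasible S Q b y -> qform z <= qform y.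

Definition qp_solvable S Q : Prop :=
  forall b, (exists y, qp_feasible S Q b y) -> exists z, qp_optimal S Q b z.

Definition qp_klipschitz L S Q : Prop :=
  forall b1 b2 z1 z2, qp_optimal S Q b1 z1 -> qp_optimal S Q b2 z2 ->
    mxnorm (z1 - z2) <= L * supn (fun j => b1 j - b2 j).

Definition qp_lipschitz S Q : Prop := exists2 L, 0 <= L & qp_klipschitz L S Q.

Definition interp x y t := x + t *: (y - x).

Definition interp_rhs b1 b2 t j := b1 j + t * (b2 j - b1 j).

Lemma dotr0 x : dotr x 0 = 0.
Proof. by rewrite /dotr big1 // => l _; rewrite mxE mulr0. Qed.

Lemma dotrB x y v : dotr (x - y) v = dotr x v - dotr y v.
Proof. by rewrite /dotr -sumrB; apply: eq_bigr => l _; rewrite !mxE mulrBl. Qed.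

Lemma dotr_interp x y t v : dotr (interp x y t) v = dotr x v + t * (dotr y v - dotr x v).
Proof.
rewrite /dotr -sumrB mulr_sumr -big_split /=.
by apply: eq_bigr => l _; rewrite !mxE; ring.
Qed.

Lemma dotr_bound x v : `|dotr x v| <= mxnorm x * \sum_l `|v 0 l|.
Proof.
rewrite /dotr mulr_sumr (le_trans (ler_norm_sum _ _ _)) //.
by apply: ler_sum => l _; rewrite normrM ler_wpM2r ?le_mxnorm.
Qed.

Lemma qform_ge0 z : 0 <= qform z.
Proof. by apply: sumr_ge0 => l _; rewrite mulr_ge0 ?sqr_ge0 ?ltW. Qed.

Lemma qform_eq0 z : qform z = 0 -> z = 0.
Proof.
move/eqP; rewrite psumr_eq0 => [/allP zE|l _]; last by rewrite mulr_ge0 ?sqr_ge0 ?ltW.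
apply/rowP => l; have /implyP := zE l (mem_index_enum _).
by rewrite mulf_eq0 (gt_eqF (h_gt0 l)) sqrf_eq0 mxE => /(_ isT)/eqP.
Qed.

Lemma qformD z v :
  qform (z + v) = qform z + 2 * (\sum_l h 0 l * z 0 l * v 0 l) + qform v.
Proof.
rewrite /qform mulr_sumr -!big_split /=.
by apply: eq_bigr => l _; rewrite !mxE; ring.
Qed.

Lemma qform_interp x y t :
  qform (interp x y t) = (1 - t) * qform x + t * qform y - t * (1 - t) * qform (x - y).
Proof.
rewrite /qform !mulr_sumr -big_split -sumrB /=.
by apply: eq_bigr => l _; rewrite !mxE; ring.
Qed.

Lemma qform_convex x y t : t \in `[0, 1] ->
  qform (interp x y t) <= (1 - t) * qform x + t * qform y.
Proof.
rewrite in_itv /= => /andP[t0 t1]; rewrite qform_interp lerBlDr lerDl.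
by rewrite !mulr_ge0 ?qform_ge0 ?subr_ge0.
Qed.

Lemma interp_rhs_id b t : interp_rhs b b t = b.
Proof. by apply/funext => j; rewrite /interp_rhs subrr mulr0 addr0. Qed.

Lemma interp_rhs0 b1 b2 : interp_rhs b1 b2 0 = b1.
Proof. by apply/funext => j; rewrite /interp_rhs mul0r addr0. Qed.

Lemma interp_rhs1 b1 b2 : interp_rhs b1 b2 1 = b2.
Proof. by apply/funext => j; rewrite /interp_rhs mul1r addrC subrK. Qed.

Lemma supn_interp_rhsB b1 b2 t s :
  supn (fun j => interp_rhs b1 b2 t j - interp_rhs b1 b2 s j)
  <= `|t - s| * supn (fun j => b1 j - b2 j).
Proof. by rewrite distrC; apply: supn_scale => j; rewrite /interp_rhs; ring. Qed.

Lemma qp_feasible_interp S Q b1 b2 x y t : t \in `[0, 1] ->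
  qp_feasible S Q b1 x -> qp_feasible S Q b2 y ->
  qp_feasible S Q (interp_rhs b1 b2 t) (interp x y t).
Proof.
rewrite in_itv /= => /andP[t0 t1] [xS xQ] [yS yQ].
split=> j jS; rewrite dotr_interp /interp_rhs; last by rewrite xQ ?yQ.
have := xS j jS; have := yS j jS; nra.
Qed.

Lemma qp_optimal_unique S Q b z1 z2 :
  qp_optimal S Q b z1 -> qp_optimal S Q b z2 -> z1 = z2.
Proof.
move=> [F1 O1] [F2 O2].
have half : 2^-1 \in `[0, 1 : R] by rewrite in_itv /=; apply/andP; split; lra.
have Fm := qp_feasible_interp half F1 F2; rewrite interp_rhs_id in Fm.
have e12 : qform z1 = qform z2 by apply/le_anti; rewrite O1 // O2.
have := O1 _ Fm; rewrite qform_interp -e12 => Hm.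
have : qform (z1 - z2) <= 0 by have := qform_ge0 (z1 - z2); lra.
by move=> H; apply/subr0_eq/qform_eq0/le_anti; rewrite H qform_ge0.
Qed.

Lemma qp_residual_lipschitz S Q L b1 b2 (zt : R -> 'rV[R]_p) i : 0 <= L ->
  qp_klipschitz L S Q ->
  {in `[0, 1], forall t, qp_optimal S Q (interp_rhs b1 b2 t) (zt t)} ->
  {in `[0, 1] &, forall t s,
    `|(dotr (zt t) (a i) - interp_rhs b1 b2 t i)
      - (dotr (zt s) (a i) - interp_rhs b1 b2 s i)|
    <= (L * \sum_l `|a i 0 l| + 1) * supn (fun j => b1 j - b2 j) * `|t - s|}.
Proof.
move=> L0 lip Ozt t s t01 s01; set bt := interp_rhs b1 b2.
set A := \sum_l `|a i 0 l|; set N := supn (fun j => b1 j - b2 j).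
have A0 : 0 <= A by apply: sumr_ge0.
have -> : dotr (zt t) (a i) - bt t i - (dotr (zt s) (a i) - bt s i) =
    dotr (zt t - zt s) (a i) - (bt t i - bt s i) by rewrite dotrB; ring.
apply: le_trans (ler_normB _ _) _.
have d1 : `|dotr (zt t - zt s) (a i)| <= L * (`|t - s| * N) * A.
  apply: le_trans (dotr_bound _ _) (ler_wpM2r A0 _).
  apply: le_trans (lip _ _ _ _ (Ozt t t01) (Ozt s s01)) _.
  by rewrite ler_wpM2l // supn_interp_rhsB.
have d2 : `|bt t i - bt s i| <= `|t - s| * N.
  exact: le_trans (le_supn (fun j => bt t j - bt s j) i) (supn_interp_rhsB _ _ _ _).
have -> : (L * A + 1) * N * `|t - s| = L * (`|t - s| * N) * A + `|t - s| * N by ring.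
exact: lerD.
Qed.

Section EqualityConstrained.
Variable Q : {set I}.

Definition eq_mx : 'M[R]_(p, #|I|) :=
  \matrix_(l, k) (if enum_val k \in Q then a (enum_val k) 0 l else 0).
Definition eq_rhs b : 'rV[R]_#|I| :=
  \row_k (if enum_val k \in Q then b (enum_val k) else 0).
Definition hinv_mx : 'M[R]_p := diag_mx (\row_l (h 0 l)^-1).
Definition gram_mx := eq_mx^T *m hinv_mx *m eq_mx.
(* Lagrange conditions: the optimum is [mu *m eq_mx^T *m hinv_mx] with
   [mu *m gram_mx = eq_rhs b]. *)
Definition solve_mx := pinvmx gram_mx *m eq_mx^T *m hinv_mx.

Lemma qp_feasible_eqE b z : qp_feasible finset.set0 Q b z <-> z *m eq_mx = eq_rhs b.
Proof.
have zE k : (z *m eq_mx) 0 k =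
    if enum_val k \in Q then dotr z (a (enum_val k)) else 0.
  rewrite mxE; case: ifP => kQ; first by apply: eq_bigr => l _; rewrite mxE kQ.
  by apply: big1 => l _; rewrite mxE kQ mulr0.
split=> [[_ zQ]|zE'].
  by apply/rowP => k; rewrite zE mxE; case: ifP => // /zQ.
split=> [j|j jQ]; first by rewrite inE.
have := congr1 (fun M : 'rV[R]_#|I| => M 0 (enum_rank j)) zE'.
by rewrite zE mxE enum_rankK jQ.
Qed.

(* [hinv_mx] is positive definite, so [X^T *m hinv_mx *m X = 0] forces [X = 0]. *)
Lemma eq_mx_coker : eq_mx *m cokermx gram_mx = 0.
Proof.
set X := eq_mx *m cokermx gram_mx.
have X0 : X^T *m hinv_mx *m X = 0.
  have -> : X^T *m hinv_mx *m X = (cokermx gram_mx)^T *m gram_mx *m cokermx gram_mx.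
    by rewrite /X trmx_mul /gram_mx !mulmxA.
  by rewrite -mulmxA mulmx_coker mulmx0.
apply/matrixP => l k; have /eqP := congr1 (fun M : 'M[R]_#|I| => M k k) X0.
rewrite !mxE (eq_bigr (fun l => (h 0 l)^-1 * X l k ^+ 2)); last first.
  by move=> i _; rewrite mul_mx_diag !mxE; ring.
rewrite psumr_eq0 => [/allP/(_ l (mem_index_enum _))|i _]; last first.
  by rewrite mulr_ge0 ?sqr_ge0 // invr_ge0 ltW.
by rewrite mulf_eq0 invr_eq0 (gt_eqF (h_gt0 l)) sqrf_eq0 mxE => /eqP.
Qed.

Lemma solve_mx_feasible b : (exists y, qp_feasible finset.set0 Q b y) ->
  qp_feasible finset.set0 Q b (eq_rhs b *m solve_mx).
Proof.
case=> y /qp_feasible_eqE yE; apply/qp_feasible_eqE.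
have sub : (eq_rhs b <= gram_mx)%MS by rewrite submxE -yE -mulmxA eq_mx_coker mulmx0.
have -> : eq_rhs b *m solve_mx *m eq_mx = eq_rhs b *m pinvmx gram_mx *m gram_mx.
  by rewrite /solve_mx /gram_mx !mulmxA.
by rewrite mulmxKpV.
Qed.

Lemma solve_mx_orthogonal b v : v *m eq_mx = 0 ->
  \sum_l h 0 l * (eq_rhs b *m solve_mx) 0 l * v 0 l = 0.
Proof.
move=> vE; set mu := eq_rhs b *m pinvmx gram_mx.
have hz l : h 0 l * (eq_rhs b *m solve_mx) 0 l = (mu *m eq_mx^T) 0 l.
  have -> : eq_rhs b *m solve_mx = mu *m eq_mx^T *m hinv_mx.
    by rewrite /solve_mx /mu !mulmxA.
  rewrite mul_mx_diag mxE [X in _ * (_ * X)]mxE.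
  by rewrite mulrCA mulfV ?mulr1 // gt_eqF.
under eq_bigr do rewrite hz [(mu *m _) _ _]mxE big_distrl /=.
rewrite exchange_big /= big1 // => k _.
have vk : \sum_l v 0 l * eq_mx l k = 0.
  by have := congr1 (fun M : 'rV[R]_#|I| => M 0 k) vE; rewrite !mxE.
rewrite (eq_bigr (fun l => mu 0 k * (v 0 l * eq_mx l k))) => [|l _]; last first.
  by rewrite [eq_mx^T _ _]mxE; ring.
by rewrite -big_distrr /= vk mulr0.
Qed.

Lemma solve_mx_optimal b : (exists y, qp_feasible finset.set0 Q b y) ->
  qp_optimal finset.set0 Q b (eq_rhs b *m solve_mx).
Proof.
move=> bfeas; have Fz := solve_mx_feasible bfeas; split=> // y /qp_feasible_eqE yE.
set z := eq_rhs b *m solve_mx.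
have vE : (y - z) *m eq_mx = 0 by rewrite mulmxBl yE (iffLR (qp_feasible_eqE _ _) Fz) subrr.
by rewrite -(subrKC z y) qformD solve_mx_orthogonal // mulr0 addr0 lerDl qform_ge0.
Qed.

Lemma qp_solvable_eq : qp_solvable finset.set0 Q.
Proof. by move=> b bfeas; exists (eq_rhs b *m solve_mx); apply: solve_mx_optimal. Qed.

Lemma qp_lipschitz_eq : qp_lipschitz finset.set0 Q.
Proof.
exists (mxnorm1 solve_mx); first exact: mxnorm1_ge0.
move=> b1 b2 z1 z2 O1 O2.
have zE b z : qp_optimal finset.set0 Q b z -> z = eq_rhs b *m solve_mx.
  by move=> Oz; apply: (qp_optimal_unique Oz); apply: solve_mx_optimal; exists z; case: Oz.
rewrite (zE _ _ O1) (zE _ _ O2) -mulmxBl.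
apply: le_trans (mxnormMr _ _) _; rewrite mulrC ler_wpM2l ?mxnorm1_ge0 //.
apply: mxnorm_le => [|i k]; first exact: supn_ge0.
rewrite !mxE; case: ifP => _; last by rewrite subrr normr0 supn_ge0.
exact: le_supn (fun j => b1 j - b2 j) _.
Qed.

End EqualityConstrained.

Section ActiveSetStep.
Variables (S Q : {set I}) (i : I).
Hypothesis iS : i \in S.
Local Notation S' := (S :\ i).
Local Notation Q' := (i |: Q).

Lemma qp_feasible_setD1 b z :
  qp_feasible S Q b z <-> qp_feasible S' Q b z /\ dotr z (a i) <= b i.
Proof.
split=> [[zS zQ]|[[zS zQ] zi]]; first by split; [split=> // j /setD1P[_ /zS] | apply: zS].
split=> // j jS; have [->|ji] := eqVneq j i; first exact: zi.
by apply: zS; rewrite in_setD1 ji.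
Qed.

Lemma qp_feasible_setU1 b z :
  qp_feasible S' Q' b z <-> qp_feasible S' Q b z /\ dotr z (a i) = b i.
Proof.
split=> [[zS zQ]|[[zS zQ] zi]].
  split; last by apply: zQ; rewrite setU11.
  by split=> // j jQ; apply: zQ; rewrite in_setU1 jQ orbT.
by split=> // j /setU1P[->|/zQ].
Qed.

Lemma qp_optimal_relax b z :
  qp_optimal S' Q b z -> dotr z (a i) <= b i -> qp_optimal S Q b z.
Proof.
by move=> [Fz Oz] zi; split=> [|y /qp_feasible_setD1[/Oz]]; first exact/qp_feasible_setD1.
Qed.

Lemma qp_optimal_active b z :
  qp_optimal S Q b z -> dotr z (a i) = b i -> qp_optimal S' Q' b z.
Proof.
move=> [/qp_feasible_setD1[Fz _] Oz] zi; split; first exact/qp_feasible_setU1.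
by move=> y /qp_feasible_setU1[Fy yi]; apply/Oz/qp_feasible_setD1; rewrite yi.
Qed.

(* A small step from [z] towards [y] keeps the slack constraint [i] satisfied,
   so convexity of [qform] along the step shows [qform z <= qform y]. *)
Lemma qp_optimal_inactive b z :
  qp_optimal S Q b z -> dotr z (a i) < b i -> qp_optimal S' Q b z.
Proof.
move=> [/qp_feasible_setD1[Fz _] Oz] zi; split=> // y Fy.
set dz := dotr z (a i); set dy := dotr y (a i).
set t := (b i - dz) / ((b i - dz) + `|dy - dz|).
have slack : 0 < b i - dz by rewrite subr_gt0.
have den : 0 < (b i - dz) + `|dy - dz| by rewrite ltr_wpDr.
have t0 : 0 < t by rewrite divr_gt0.
have t01 : t \in `[0, 1].
  by rewrite in_itv /= ltW //= ler_pdivrMr // mul1r lerDl.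
have Ft : qp_feasible S Q b (interp z y t).
  apply/qp_feasible_setD1; split.
    by have := qp_feasible_interp t01 Fz Fy; rewrite interp_rhs_id.
  rewrite dotr_interp -/dz -/dy.
  have : t * (dy - dz) <= t * `|dy - dz| by rewrite ler_wpM2l ?(ltW t0) ?ler_norm.
  have : t * `|dy - dz| <= b i - dz.
    rewrite /t mulrAC ler_pdivrMr //.
    by apply: ler_wpM2l; [exact: ltW | rewrite lerDr ltW].
  lra.
have zt := Oz _ Ft; have convex := qform_convex z y t01.
have : t * qform z <= t * qform y by lra.
by rewrite ler_pM2l.
Qed.

Lemma qp_feasible_crossing b x z :
  qp_feasible S' Q b x -> qp_feasible S' Q b z ->
  dotr x (a i) <= b i -> b i < dotr z (a i) ->
  exists2 s, s \in `[0, 1] & qp_feasible S' Q' b (interp x z s).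
Proof.
move=> Fx Fz xi zi; set dx := dotr x (a i) in xi *; set dz := dotr z (a i) in zi *.
have den : 0 < dz - dx by rewrite subr_gt0 (le_lt_trans xi).
set s := (b i - dx) / (dz - dx).
have s01 : s \in `[0, 1].
  rewrite in_itv /= ler_pdivrMr // mul1r lerD2r (ltW zi) andbT.
  by apply: divr_ge0; [rewrite subr_ge0 | exact: ltW].
exists s => //; apply/qp_feasible_setU1; split.
  by have := qp_feasible_interp s01 Fx Fz; rewrite interp_rhs_id.
by rewrite dotr_interp -/dx -/dz mulfVK ?gt_eqF // addrC subrK.
Qed.

(* If the optimum without constraint [i] violates it, then segments from any
   [S]-feasible point to that optimum cross the face [dotr _ (a i) = b i] at a
   point that is no worse, so the optimum over the face is [S]-optimal. *)
Lemma qp_solvable_step : qp_solvable S' Q -> qp_solvable S' Q' -> qp_solvable S Q.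
Proof.
move=> solvS' solvQ' b [y /qp_feasible_setD1[Fy yi]].
have [z' [Fz' Oz']] := solvS' b (ex_intro _ y Fy).
have [z'i|z'i] := leP (dotr z' (a i)) (b i); first by exists z'; apply: qp_optimal_relax.
have [s s01 Fs] := qp_feasible_crossing Fy Fz' yi z'i.
have [z [Fz Oz]] := solvQ' b (ex_intro _ _ Fs).
exists z; split.
  by have /qp_feasible_setU1[? zi] := Fz; apply/qp_feasible_setD1; rewrite zi.
move=> y' /qp_feasible_setD1[Fy' y'i].
have [s' s'01 Fs'] := qp_feasible_crossing Fy' Fz' y'i z'i.
apply: le_trans (Oz _ Fs') _; apply: le_trans (qform_convex _ _ s'01) _.
have := Oz' _ Fy'; move: s'01; rewrite in_itv /= => /andP[? ?]; nra.
Qed.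

(* Along the segment from [b1] to [b2], the slack of constraint [i] at the
   optimum without it is Lipschitz in the parameter and changes sign. *)
Lemma qp_switch_point b1 b2 z1 z2 : qp_solvable S' Q -> qp_lipschitz S' Q ->
  qp_optimal S Q b1 z1 -> qp_optimal S Q b2 z2 ->
  dotr z1 (a i) < b1 i -> dotr z2 (a i) = b2 i ->
  exists2 t, t \in `[0, 1] & exists2 z,
    qp_optimal S' Q (interp_rhs b1 b2 t) z & dotr z (a i) = interp_rhs b1 b2 t i.
Proof.
move=> solvS' [L L0 lipS'] O1 O2 z1i z2i.
set bt := interp_rhs b1 b2; set N := supn (fun j => b1 j - b2 j).
pose zt t := xget 0 (qp_optimal S' Q (bt t)).
have Ozt t : t \in `[0, 1] -> qp_optimal S' Q (bt t) (zt t).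
  move=> t01; apply: xgetPex; apply: solvS'; exists (interp z1 z2 t).
  by have /qp_feasible_setD1[] := qp_feasible_interp t01 (proj1 O1) (proj1 O2).
pose slack t := dotr (zt t) (a i) - bt t i.
have K0 : 0 <= (L * \sum_l `|a i 0 l| + 1) * N.
  by rewrite mulr_ge0 ?supn_ge0 // addr_ge0 // mulr_ge0 // sumr_ge0.
have slack_lip := qp_residual_lipschitz i L0 lipS' Ozt.
have itv0 : 0 \in `[0, 1 : R] by rewrite in_itv /= lexx ler01.
have itv1 : 1 \in `[0, 1 : R] by rewrite in_itv /= lexx ler01.
have slack0 : slack 0 < 0.
  have zt0 : zt 0 = z1.
    apply: qp_optimal_unique (Ozt 0 itv0) _.
    by rewrite /bt interp_rhs0; apply: qp_optimal_inactive.
  by rewrite /slack zt0 /bt interp_rhs0 subr_lt0.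
have slack1 : 0 <= slack 1.
  rewrite leNgt /slack /bt interp_rhs1 subr_lt0; apply/negP => z1i'.
  have O1' : qp_optimal S Q b2 (zt 1).
    apply: qp_optimal_relax (ltW z1i').
    by rewrite -[X in qp_optimal _ _ X](interp_rhs1 b1 b2); apply: Ozt.
  by move: z1i'; rewrite (qp_optimal_unique O1' O2) z2i ltxx.
have sign : Num.min (slack 0) (slack 1) <= 0 <= Num.max (slack 0) (slack 1).
  by rewrite ge_min le_max (ltW slack0) slack1 orbT.
have [t t01 /eqP] := IVT ler01 (@lipschitz01_continuous _ slack _ K0 slack_lip) sign.
by rewrite subr_eq0 => /eqP zti; exists t => //; exists (zt t); first exact: Ozt.
Qed.

Lemma qp_klipschitz_switch LR LE b1 b2 z1 z2 : 0 <= LR -> 0 <= LE ->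
  qp_solvable S' Q -> qp_klipschitz LR S' Q -> qp_klipschitz LE S' Q' ->
  qp_optimal S Q b1 z1 -> qp_optimal S Q b2 z2 ->
  dotr z1 (a i) < b1 i -> dotr z2 (a i) = b2 i ->
  mxnorm (z1 - z2) <= (LR + LE) * supn (fun j => b1 j - b2 j).
Proof.
move=> LR0 LE0 solvS' lipS' lipQ' O1 O2 z1i z2i.
have [t t01 [z Oz zi]] := qp_switch_point solvS' (ex_intro2 _ _ LR LR0 lipS') O1 O2 z1i z2i.
set N := supn (fun j => b1 j - b2 j); have N0 : 0 <= N by apply: supn_ge0.
have r1 := lipS' _ _ _ _ (qp_optimal_inactive O1 z1i) Oz.
have OzS : qp_optimal S Q (interp_rhs b1 b2 t) z by apply: qp_optimal_relax; rewrite ?zi.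
have r2 := lipQ' _ _ _ _ (qp_optimal_active OzS zi) (qp_optimal_active O2 z2i).
move: t01; rewrite in_itv /= => /andP[t0 t1].
have n1 : supn (fun j => b1 j - interp_rhs b1 b2 t j) <= t * N.
  by have := supn_interp_rhsB b1 b2 0 t; rewrite interp_rhs0 sub0r normrN ger0_norm.
have n2 : supn (fun j => interp_rhs b1 b2 t j - b2 j) <= (1 - t) * N.
  have := supn_interp_rhsB b1 b2 t 1; rewrite interp_rhs1 distrC ger0_norm //.
  by rewrite subr_ge0.
apply: le_trans (mxnormB_le _ z _) _.
have := ler_wpM2l LR0 n1; have := ler_wpM2l LE0 n2.
have : 0 <= LR * ((1 - t) * N) by rewrite !mulr_ge0 // subr_ge0.
have : 0 <= LE * (t * N) by rewrite !mulr_ge0.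
lra.
Qed.

Lemma qp_lipschitz_step :
  qp_solvable S' Q -> qp_lipschitz S' Q -> qp_lipschitz S' Q' -> qp_lipschitz S Q.
Proof.
move=> solvS' [LR LR0 lipS'] [LE LE0 lipQ']; exists (LR + LE); first exact: addr_ge0.
move=> b1 b2 z1 z2 O1 O2.
have N0 := supn_ge0 (fun j => b1 j - b2 j).
have slack b z : qp_optimal S Q b z -> dotr z (a i) < b i \/ dotr z (a i) = b i.
  by case=> /qp_feasible_setD1[_]; rewrite le_eqVlt => /orP[/eqP|]; [right|left].
case: (slack _ _ O1) => z1i; case: (slack _ _ O2) => z2i.
- apply: le_trans (lipS' _ _ _ _ (qp_optimal_inactive O1 z1i) (qp_optimal_inactive O2 z2i)) _.
  by rewrite ler_wpM2r // lerDl.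
- exact: qp_klipschitz_switch.
- by rewrite mxnormBC supnBC; apply: qp_klipschitz_switch.
- apply: le_trans (lipQ' _ _ _ _ (qp_optimal_active O1 z1i) (qp_optimal_active O2 z2i)) _.
  by rewrite ler_wpM2r // lerDr.
Qed.

End ActiveSetStep.

Theorem qp_solvable_lipschitz S Q : qp_solvable S Q /\ qp_lipschitz S Q.
Proof.
move: {2}#|S| (erefl #|S|) => k; elim: k S Q => [|k IHk] S Q cardS.
  move/eqP: cardS; rewrite cards_eq0 => /eqP ->.
  by split; [apply: qp_solvable_eq | apply: qp_lipschitz_eq].
have [i iS] : exists i, i \in S by apply/set0Pn; rewrite -card_gt0 cardS.
have cardS' : #|S :\ i| = k by move: cardS; rewrite (cardsD1 i) iS => -[].
have [solvS' lipS'] := IHk _ Q cardS'; have [solvQ' lipQ'] := IHk _ (i |: Q) cardS'.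
split; [exact: (qp_solvable_step iS) | exact: (qp_lipschitz_step iS)].
Qed.

End QuadraticProgram.

Section EulerScheme.
Variables (R : realType) (m n N : nat) (D : 'M[R]_(m, n)).
Variables (Mr Er : 'rV[R]_n) (Yr : 'rV[R]_m) (T : R).

Definition inv_mass : 'M[R]_n := diag_mx (\row_i (Mr 0 i)^-1).

Definition euler_f (F : 'cV[R]_m) (W : 'cV[R]_n) : 'cV[R]_m :=
  F + T *: (diag_mx Yr *m D *m W).

Definition euler_w (F : 'cV[R]_m) (W v u : 'cV[R]_n) : 'cV[R]_n :=
  W + inv_mass *m (T *: (- (diag_mx Er *m W) - D^T *m F + v + u)).

Definition forecast_col (P : 'M[R]_(n, N)) (k : nat) : 'cV[R]_n :=
  if @insub _ (fun k => k < N)%N 'I_N k is Some j then col j P else 0.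

Fixpoint euler_state (f0 : 'cV[R]_m) (w0 : 'cV[R]_n) (P : 'M[R]_(n, N))
    (u : 'cV[R]_n) (k : nat) : 'cV[R]_m * 'cV[R]_n :=
  if k is k'.+1 then
    let x := euler_state f0 w0 P u k' in
    (euler_f x.1 x.2, euler_w x.1 x.2 (forecast_col P k') u)
  else (f0, w0).

Fixpoint input_gain (k : nat) : 'M[R]_(m, n) * 'M[R]_n :=
  if k is k'.+1 then
    let G := input_gain k' in
    (G.1 + T *: (diag_mx Yr *m D *m G.2),
     G.2 + inv_mass *m (T *: (- (diag_mx Er *m G.2) - D^T *m G.1 + 1%:M)))
  else (0, 0).

Lemma forecast_col_ord P (j : 'I_N) : forecast_col P j = col j P.
Proof. by rewrite /forecast_col valK. Qed.

Lemma forecast_colD P P' k :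
  forecast_col (P + P') k = forecast_col P k + forecast_col P' k.
Proof. by rewrite /forecast_col; case: insub => [j|]; rewrite ?addr0 ?linearD. Qed.

Lemma forecast_col0 k : forecast_col 0 k = 0.
Proof. by rewrite /forecast_col; case: insub => // j; rewrite linear0. Qed.

Lemma mxnorm_forecast_col P k : mxnorm (forecast_col P k) <= mxnorm P.
Proof.
rewrite /forecast_col; case: insub => [j|];
  apply: mxnorm_le => [|i l]; rewrite ?mxnorm_ge0 //.
  by rewrite mxE le_mxnorm.
by rewrite mxE normr0 mxnorm_ge0.
Qed.

Lemma addr_affine4 (V : zmodType) (x x' y y' v v' w w' : V) :
  - (x + x') - (y + y') + (v + v') + (w + w') =
  (- x - y + v + w) + (- x' - y' + v' + w').
Proof. by rewrite !opprD (addrACA (- x)) (addrACA (- x - y)) (addrACA (- x - y + v)). Qed.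

Lemma euler_fD F F' W W' : euler_f (F + F') (W + W') = euler_f F W + euler_f F' W'.
Proof. by rewrite /euler_f mulmxDr scalerDr addrACA. Qed.

Lemma euler_wD F F' W W' v v' u u' :
  euler_w (F + F') (W + W') (v + v') (u + u') = euler_w F W v u + euler_w F' W' v' u'.
Proof. by rewrite /euler_w !mulmxDr addr_affine4 scalerDr mulmxDr addrACA. Qed.

Lemma euler_stateD f0 f0' w0 w0' P P' u u' k :
  euler_state (f0 + f0') (w0 + w0') (P + P') (u + u') k =
  ((euler_state f0 w0 P u k).1 + (euler_state f0' w0' P' u' k).1,
   (euler_state f0 w0 P u k).2 + (euler_state f0' w0' P' u' k).2).
Proof. by elim: k => [|k IHk] //=; rewrite IHk /= euler_fD forecast_colD euler_wD. Qed.

Lemma euler_state_input u k :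
  euler_state 0 0 0 u k = ((input_gain k).1 *m u, (input_gain k).2 *m u).
Proof.
elim: k => [|k IHk] /=; first by rewrite !mul0mx.
rewrite IHk /= forecast_col0 /euler_f /euler_w addr0; congr (_, _).
  by rewrite mulmxDl -scalemxAl mulmxA.
by rewrite mulmxDl -!mulmxA -scalemxAl mulmxDl mulmxBl mulNmx mul1mx !mulmxA.
Qed.

Definition free_response f0 w0 P k := (euler_state f0 w0 P 0 k).2.

Definition input_gain_w k := (input_gain k).2.

Lemma euler_state_w f0 w0 P u k :
  (euler_state f0 w0 P u k).2 = input_gain_w k *m u + free_response f0 w0 P k.
Proof.
have := euler_stateD 0 f0 0 w0 0 P u 0 k; rewrite !add0r addr0 => ->.
by rewrite euler_state_input addrC.
Qed.

Lemma free_responseB f1 f2 w1 w2 P1 P2 k :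
  free_response f1 w1 P1 k - free_response f2 w2 P2 k =
  free_response (f1 - f2) (w1 - w2) (P1 - P2) k.
Proof.
have := euler_stateD f2 (f1 - f2) w2 (w1 - w2) P2 (P1 - P2) 0 0 k.
rewrite !subrKC addr0 /free_response => -> /=.
by rewrite addrAC subrr add0r.
Qed.

Definition euler_growth : R := 1 + `|T| * (mxnorm1 (diag_mx Yr *m D)
  + mxnorm1 inv_mass * (mxnorm1 (diag_mx Er) + mxnorm1 D^T + 1)).

Lemma euler_growth_ge1 : 1 <= euler_growth.
Proof. by rewrite lerDl !(mulr_ge0, addr_ge0) ?mxnorm1_ge0. Qed.

Lemma euler_step_bound F W v c : mxnorm v <= c ->
  mxnorm (euler_f F W) + mxnorm (euler_w F W v 0) + c <=
  euler_growth * (mxnorm F + mxnorm W + c).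
Proof.
move=> vc; rewrite /euler_f /euler_w addr0.
rewrite /euler_growth; set t := `|T|; set y := mxnorm1 (diag_mx Yr *m D).
set mi := mxnorm1 inv_mass; set e := mxnorm1 (diag_mx Er); set d := mxnorm1 D^T.
have [t0 y0 mi0 e0 d0] : [/\ 0 <= t, 0 <= y, 0 <= mi, 0 <= e & 0 <= d].
  by split; rewrite ?normr_ge0 ?mxnorm1_ge0.
have [F0 W0 c0] : [/\ 0 <= mxnorm F, 0 <= mxnorm W & 0 <= c].
  by split; rewrite ?mxnorm_ge0 // (le_trans (mxnorm_ge0 _) vc).
have sF : mxnorm (F + T *: (diag_mx Yr *m D *m W)) <= mxnorm F + t * (y * mxnorm W).
  apply: le_trans (mxnormD _ _) _; rewrite lerD2l (le_trans (mxnormZ _ _)) //.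
  by rewrite ler_wpM2l // mxnormMl.
have sW : mxnorm (W + inv_mass *m (T *: (- (diag_mx Er *m W) - D^T *m F + v))) <=
    mxnorm W + mi * (t * (e * mxnorm W + d * mxnorm F + c)).
  apply: le_trans (mxnormD _ _) _; rewrite lerD2l (le_trans (mxnormMl _ _)) //.
  rewrite ler_wpM2l // (le_trans (mxnormZ _ _)) // ler_wpM2l //.
  apply: le_trans (mxnormD _ _) _; apply: lerD => //.
  apply: le_trans (mxnormD _ _) _; rewrite !mxnormN.
  by apply: lerD; apply: mxnormMl.
apply: le_trans (lerD (lerD sF sW) (lexx c)) _.
rewrite -subr_ge0.
set nF := mxnorm F; set nW := mxnorm W.
have -> : (1 + t * (y + mi * (e + d + 1))) * (nF + nW + c)
    - (nF + t * (y * nW) + (nW + mi * (t * (e * nW + d * nF + c))) + c)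
    = t * y * (nF + c) + t * mi * (e * (nF + c) + d * (nW + c) + nF + nW) by ring.
by rewrite !(mulr_ge0, addr_ge0).
Qed.

Lemma euler_state_bound f0 w0 P k :
  mxnorm (euler_state f0 w0 P 0 k).1 + mxnorm (euler_state f0 w0 P 0 k).2 + mxnorm P <=
  euler_growth ^+ k * (mxnorm f0 + mxnorm w0 + mxnorm P).
Proof.
elim: k => [|k IHk] /=; first by rewrite expr0 mul1r.
apply: le_trans (euler_step_bound _ _ (mxnorm_forecast_col P k)) _.
rewrite exprS -mulrA ler_wpM2l // (le_trans _ euler_growth_ge1) //.
Qed.

Lemma free_response_lipschitz f1 f2 w1 w2 P1 P2 k i : (k <= N)%N ->
  `|free_response f1 w1 P1 k i 0 - free_response f2 w2 P2 k i 0| <=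
  euler_growth ^+ N * (mxnorm (P1 - P2) + mxnorm (f1 - f2) + mxnorm (w1 - w2)).
Proof.
move=> kN.
have -> : free_response f1 w1 P1 k i 0 - free_response f2 w2 P2 k i 0 =
    (free_response f1 w1 P1 k - free_response f2 w2 P2 k) i 0 by rewrite !mxE.
rewrite free_responseB.
apply: le_trans (le_mxnorm _ i 0) _.
set X := mxnorm (f1 - f2) + mxnorm (w1 - w2) + mxnorm (P1 - P2).
apply: le_trans (_ : _ <= euler_growth ^+ k * X) _.
  apply: le_trans (euler_state_bound _ _ _ k); rewrite -addrA addrCA lerDl.
  by rewrite addr_ge0 ?mxnorm_ge0.
have -> : mxnorm (P1 - P2) + mxnorm (f1 - f2) + mxnorm (w1 - w2) = X by rewrite /X; ring.
have X0 : 0 <= X by rewrite /X !addr_ge0 ?mxnorm_ge0.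
by rewrite ler_wpM2r // ler_weXn2l ?euler_growth_ge1.
Qed.

End EulerScheme.

Section MpcAsQuadraticProgram.
Variables (R : realType) (m n N : nat) (D : 'M[R]_(m, n)) (Mr Er : 'rV[R]_n).
Variables (Yr : 'rV[R]_m) (Iu Iw : {set 'I_n}) (T d : R) (c eps Ti wlo whi : 'cV[R]_n).
Hypothesis HM : forall i, 0 < Mr 0 i.
Hypothesis Hc : forall i, i \in Iu -> 0 < c i 0.
Hypothesis Heps : forall i, 0 < eps i 0.
Hypothesis Hd : 0 < d.

Local Notation state := (euler_state D Mr Er Yr T).
Local Notation free := (free_response D Mr Er Yr T).
Local Notation gain := (input_gain_w D Mr Er Yr T).

Definition qp_var (u : 'cV[R]_n) (be : R) : 'rV[R]_(1 + n) := row_mx (\row_(j < 1) be) u^T.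
Definition qp_u (z : 'rV[R]_(1 + n)) : 'cV[R]_n := (rsubmx z)^T.
Definition qp_beta (z : 'rV[R]_(1 + n)) : R := z 0 (lshift n ord0).

Lemma qp_varK_u u be : qp_u (qp_var u be) = u.
Proof. by rewrite /qp_u /qp_var row_mxKr trmxK. Qed.

Lemma qp_var_eta z : qp_var (qp_u z) (qp_beta z) = z.
Proof.
rewrite /qp_var /qp_u trmxK -[RHS]hsubmxK; congr row_mx.
by apply/rowP => j; rewrite (ord1 j) !mxE.
Qed.

Lemma dotr_qp_var u be v ga :
  dotr (qp_var u be) (qp_var v ga) = be * ga + \sum_i u i 0 * v i 0.
Proof.
rewrite /dotr big_split_ord big_ord1 /qp_var !row_mxEl !mxE; congr (_ + _).
by apply: eq_bigr => i _; rewrite !row_mxEr !mxE.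
Qed.

(* Unit weights on the components outside [Iu], where [u] vanishes. *)
Definition mpc_weights : 'rV[R]_(1 + n) :=
  qp_var (\col_i (if i \in Iu then c i 0 else 1)) d.

Lemma mpc_weights_gt0 l : 0 < mpc_weights 0 l.
Proof.
rewrite -(fintype.splitK l); case: (fintype.split l) => j /=; rewrite /mpc_weights /qp_var.
  by rewrite row_mxEl mxE.
by rewrite row_mxEr !mxE; case: ifP => [/Hc|]; rewrite ?ltr01.
Qed.

Lemma qform_qp_var u be :
  inA Iu u -> qform mpc_weights (qp_var u be) = mpc_cost Iu c d u be.
Proof.
move=> uA; rewrite /qform /mpc_cost big_split_ord big_ord1 /mpc_weights /qp_var.
rewrite !row_mxEl !mxE addrC [in RHS]big_mkcond /=; congr (_ + _).
apply: eq_bigr => i _; rewrite !row_mxEr !mxE.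
by case: ifP => // iu; rewrite uA ?iu // expr0n mulr0.
Qed.

(* Constraints in the variable [(beta, u)]: [inl] the two halves of
   [|u_i| <= eps_i |a0_i|], [inr] the upper and lower frequency bounds at
   step [k + 1]; after the Euler scheme is unrolled, [w_i(k+1)] is
   [(gain (k+1) *m u)_i] plus the free response. *)
Definition mpc_cstr := (('I_n + 'I_n) + ('I_N * 'I_n + 'I_N * 'I_n))%type.

Definition mpc_row (j : mpc_cstr) : 'rV[R]_(1 + n) :=
  match j with
  | inl (inl i) => qp_var (delta_mx i 0) 0
  | inl (inr i) => qp_var (- delta_mx i 0) 0
  | inr (inl (k, i)) => if i \in Iw then qp_var (row i (gain k.+1))^T (-1) else 0
  | inr (inr (k, i)) => if i \in Iw then qp_var (- (row i (gain k.+1))^T) (-1) else 0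
  end.

Definition mpc_lhs (u : 'cV[R]_n) (be : R) (j : mpc_cstr) : R :=
  match j with
  | inl (inl i) => u i 0
  | inl (inr i) => - u i 0
  | inr (inl (k, i)) => if i \in Iw then (gain k.+1 *m u) i 0 - be else 0
  | inr (inr (k, i)) => if i \in Iw then - (gain k.+1 *m u) i 0 - be else 0
  end.

Definition mpc_rhs (P : 'M[R]_(n, N)) (f0 : 'cV[R]_m) (w0 a0 : 'cV[R]_n)
    (j : mpc_cstr) : R :=
  match j with
  | inl (inl i) | inl (inr i) => eps i 0 * `|a0 i 0|
  | inr (inl (k, i)) => if i \in Iw then whi i 0 - free f0 w0 P k.+1 i 0 else 0
  | inr (inr (k, i)) => if i \in Iw then free f0 w0 P k.+1 i 0 - wlo i 0 else 0
  end.

Lemma dotr_mpc_row u be j : dotr (qp_var u be) (mpc_row j) = mpc_lhs u be j.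
Proof.
have dotr_delta i : \sum_l u l 0 * delta_mx i 0 l 0 = u i 0.
  rewrite (bigD1 i) //= big1 => [|l li]; first by rewrite mxE !eqxx mulr1 addr0.
  by rewrite mxE (negbTE li) mulr0.
case: j => [[i|i]|[[k i]|[k i]]] /=; rewrite ?dotr_qp_var ?mulr0 ?add0r.
- exact: dotr_delta.
- by rewrite -(dotr_delta i) -sumrN; apply: eq_bigr => l _; rewrite !mxE mulrN.
- case: ifP => _; rewrite ?dotr0 // dotr_qp_var mulrN1 addrC mxE; congr (_ - _).
  by apply: eq_bigr => l _; rewrite !mxE mulrC.
- case: ifP => _; rewrite ?dotr0 // dotr_qp_var mulrN1 addrC mxE -sumrN; congr (_ - _).
  by apply: eq_bigr => l _; rewrite !mxE mulrN mulrC.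
Qed.

Lemma val_inord_ord (k : 'I_N) : (inord k : 'I_N.+1) = k :> nat.
Proof. by rewrite inordK // ltnW // ltnS. Qed.

Lemma val_inord_ordS (k : 'I_N) : (inord k.+1 : 'I_N.+1) = k.+1 :> nat.
Proof. by rewrite inordK // ltnS. Qed.

Lemma inv_massK : inv_mass Mr *m diag_mx Mr = 1%:M.
Proof.
rewrite mulmx_diag -diag_const_mx; congr diag_mx.
by apply/rowP => j; rewrite !mxE mulVf // gt_eqF.
Qed.

Lemma mass_invK : diag_mx Mr *m inv_mass Mr = 1%:M.
Proof.
rewrite mulmx_diag -diag_const_mx; congr diag_mx.
by apply/rowP => j; rewrite !mxE mulfV // gt_eqF.
Qed.

Section FixedData.
Variables (P : 'M[R]_(n, N)) (f0 : 'cV[R]_m) (w0 a0 : 'cV[R]_n).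

Local Notation mpc_feasible_at :=
  (mpc_feasible D Mr Er Yr Iu Iw T eps Ti wlo whi P f0 w0 a0).
Local Notation mpc_qp_feasible :=
  (qp_feasible mpc_row [set: mpc_cstr] finset.set0 (mpc_rhs P f0 w0 a0)).

Lemma mpc_qp_feasibleP z :
  mpc_qp_feasible z <-> forall j, dotr z (mpc_row j) <= mpc_rhs P f0 w0 a0 j.
Proof.
split=> [[zS _] j|zS]; first by apply: zS; rewrite inE.
by split=> [j _|j]; [apply: zS | rewrite inE].
Qed.

Lemma mpc_feasible_state F W Aa u be : mpc_feasible_at F W Aa u be ->
  forall k, (k <= N)%N -> col (inord k) F = (state f0 w0 P u k).1 /\
                          col (inord k) W = (state f0 w0 P u k).2.
Proof.
case=> dF [dW [_ [_ [_ [[F0 W0 _] _]]]]].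
elim=> [|k IHk] kN.
  by have -> : (inord 0 : 'I_N.+1) = 0 by apply/val_inj; rewrite /= inordK.
have [IF IW] := IHk (ltnW kN).
have := dF (Ordinal kN); have := dW (Ordinal kN); rewrite /= -IF -IW => dWk dFk.
split; first by rewrite dFk.
rewrite /euler_w; rewrite -(forecast_col_ord P (Ordinal kN)) /= in dWk.
by rewrite -[col _ W]mul1mx -inv_massK -mulmxA dWk mulmxDr mulmxA inv_massK mul1mx.
Qed.

Lemma mpc_feasible_w F W Aa u be : mpc_feasible_at F W Aa u be ->
  forall (k : 'I_N) i, W i (inord k.+1) = (gain k.+1 *m u) i 0 + free f0 w0 P k.+1 i 0.
Proof.
move=> Hf k i.
have [_ /(congr1 (fun M : 'cV[R]_n => M i 0))] := mpc_feasible_state Hf (ltn_ord k).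
by rewrite mxE euler_state_w mxE [in RHS]mxE => ->.
Qed.

Lemma mpc_feasible_qp F W Aa u be : mpc_feasible_at F W Aa u be ->
  mpc_qp_feasible (qp_var u be) /\ inA Iu u.
Proof.
move=> Hf; have Wk := mpc_feasible_w Hf.
case: Hf => _ [_ [_ [_ [uA [_ [wB uB]]]]]].
have box i : `|u i 0| <= eps i 0 * `|a0 i 0|.
  by case: (boolP (i \in Iu)) => [/uB //|iu]; rewrite uA // normr0 mulr_ge0 ?(ltW (Heps i)).
split=> //; apply/mpc_qp_feasibleP => j; rewrite dotr_mpc_row.
case: j => [[i|i]|[[k i]|[k i]]] /=.
- exact: le_trans (ler_norm _) (box i).
- by rewrite lerNl; apply: lerNnormlW (box i).
- case: ifP => // iw; have := wB k i iw; rewrite Wk => /andP[_]; lra.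
- case: ifP => // iw; have := wB k i iw; rewrite Wk => /andP[+ _]; lra.
Qed.

Fixpoint mpc_alpha (u : 'cV[R]_n) (k : nat) : 'cV[R]_n :=
  if k is k'.+1 then
    \col_i (if i \in Iu then mpc_alpha u k' i 0
               + T * (- (mpc_alpha u k' i 0 / Ti i 0) - (state f0 w0 P u k').2 i 0 + u i 0)
            else 0)
  else a0.

Definition mpc_F u : 'M[R]_(m, N.+1) := \matrix_(e, k) (state f0 w0 P u k).1 e 0.
Definition mpc_W u : 'M[R]_(n, N.+1) := \matrix_(i, k) (state f0 w0 P u k).2 i 0.
Definition mpc_A u : 'M[R]_(n, N.+1) := \matrix_(i, k) mpc_alpha u k i 0.

Lemma col_mpc_F u (k : 'I_N.+1) : col k (mpc_F u) = (state f0 w0 P u k).1.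
Proof. by apply/colP => e; rewrite !mxE. Qed.

Lemma col_mpc_W u (k : 'I_N.+1) : col k (mpc_W u) = (state f0 w0 P u k).2.
Proof. by apply/colP => e; rewrite !mxE. Qed.

Lemma col_mpc_A u (k : 'I_N.+1) : col k (mpc_A u) = mpc_alpha u k.
Proof. by apply/colP => e; rewrite !mxE. Qed.

Lemma qp_feasible_mpc z : inA Iu a0 -> mpc_qp_feasible z ->
  mpc_feasible_at (mpc_F (qp_u z)) (mpc_W (qp_u z)) (mpc_A (qp_u z)) (qp_u z) (qp_beta z).
Proof.
move=> a0A /mpc_qp_feasibleP zS; set u := qp_u z; set be := qp_beta z.
have {}zS j : mpc_lhs u be j <= mpc_rhs P f0 w0 a0 j by rewrite -dotr_mpc_row qp_var_eta.
have boxu i : `|u i 0| <= eps i 0 * `|a0 i 0|.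
  by rewrite ler_norml -lerNl (zS (inl (inl i))) (zS (inl (inr i))).
split; first by move=> k; rewrite !col_mpc_F col_mpc_W val_inord_ordS val_inord_ord.
split.
  move=> k; rewrite !col_mpc_W col_mpc_F val_inord_ordS val_inord_ord /=.
  by rewrite /euler_w mulmxDr mulmxA mass_invK mul1mx forecast_col_ord.
split.
  by move=> k i iu; rewrite !mxE val_inord_ordS val_inord_ord /= [LHS]mxE iu !mxE.
split.
  move=> k i iu; rewrite mxE; case: (nat_of_ord k) => [|k'] /=; first exact: a0A.
  by rewrite mxE (negbTE iu).
split.
  by move=> i iu; apply/eqP; rewrite -normr_le0 (le_trans (boxu i)) // a0A // normr0 mulr0.
split; first by rewrite col_mpc_F col_mpc_W col_mpc_A.
split=> [k i iw|i _]; last exact: boxu.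
have := zS (inr (inl (k, i))); have := zS (inr (inr (k, i))); rewrite /= iw.
move=> lo hi; rewrite [mpc_W _ _ _]mxE val_inord_ordS euler_state_w mxE.
by apply/andP; split; lra.
Qed.

Local Notation mpc_qp_optimal :=
  (qp_optimal mpc_weights mpc_row [set: mpc_cstr] finset.set0 (mpc_rhs P f0 w0 a0)).

Lemma qp_optimal_mpc z : inA Iu a0 -> mpc_qp_optimal z ->
  mpc_optimal D Mr Er Yr Iu Iw T c eps Ti wlo whi d P f0 w0 a0
    (mpc_F (qp_u z)) (mpc_W (qp_u z)) (mpc_A (qp_u z)) (qp_u z) (qp_beta z).
Proof.
move=> a0A [Fz Oz]; have Hz := qp_feasible_mpc a0A Fz.
split=> // F W Aa u be /mpc_feasible_qp[Fu uA].
have [_ zuA] := mpc_feasible_qp Hz.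
by rewrite -!qform_qp_var // qp_var_eta; apply: Oz.
Qed.

Lemma mpc_optimal_qp F W Aa u be : inA Iu a0 ->
  mpc_optimal D Mr Er Yr Iu Iw T c eps Ti wlo whi d P f0 w0 a0 F W Aa u be ->
  mpc_qp_optimal (qp_var u be).
Proof.
move=> a0A [Hf Of]; have [Fz uA] := mpc_feasible_qp Hf.
split=> // y Fy; have Hy := qp_feasible_mpc a0A Fy.
have [_ yA] := mpc_feasible_qp Hy.
by rewrite qform_qp_var // -(qp_var_eta y) qform_qp_var //; apply: Of Hy.
Qed.

Lemma uhat_star_qp z : inA Iu a0 -> mpc_qp_optimal z ->
  uhat_star D Mr Er Yr Iu Iw T c eps Ti wlo whi d P f0 w0 a0 = qp_u z.
Proof.
move=> a0A Oz; apply: xget_unique; first by do 4 eexists; apply: qp_optimal_mpc.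
move=> y [F [W [Aa [be /(mpc_optimal_qp a0A) Oy]]]].
by rewrite -(qp_varK_u y be) (qp_optimal_unique mpc_weights_gt0 Oy Oz).
Qed.

Lemma mpc_qp_feasible_ex : exists z, mpc_qp_feasible z.
Proof.
exists (qp_var 0 (supn (mpc_rhs P f0 w0 a0))).
apply/mpc_qp_feasibleP => j; rewrite dotr_mpc_row.
have := lerNnormlW (le_supn (mpc_rhs P f0 w0 a0) j).
case: j => [[i|i]|[[k i]|[k i]]];
  rewrite /mpc_lhs /mpc_rhs ?mulmx0 [(0 : 'cV[R]_n) i 0]mxE ?oppr0 => bj.
- exact: mulr_ge0 (ltW (Heps i)) (normr_ge0 _).
- exact: mulr_ge0 (ltW (Heps i)) (normr_ge0 _).
- by case: (i \in Iw) bj => //; rewrite add0r.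
- by case: (i \in Iw) bj => //; rewrite add0r.
Qed.

End FixedData.

Lemma mxnorm_qp_uB z1 z2 : mxnorm (qp_u z1 - qp_u z2) <= mxnorm (z1 - z2).
Proof.
apply: mxnorm_le => [|i j]; first exact: mxnorm_ge0.
by have := le_mxnorm (z1 - z2) 0 (rshift 1 i); rewrite (ord1 j) !mxE.
Qed.

Lemma mpc_rhs_lipschitz P1 P2 f1 f2 w1 w2 a1 a2 :
  supn (fun j => mpc_rhs P1 f1 w1 a1 j - mpc_rhs P2 f2 w2 a2 j) <=
  (mxnorm eps + euler_growth D Mr Er Yr T ^+ N) *
  (mxnorm (P1 - P2) + mxnorm (f1 - f2) + mxnorm (w1 - w2) + mxnorm (a1 - a2)).
Proof.
set Dl := _ + mxnorm (a1 - a2); set g := euler_growth _ _ _ _ _.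
have g0 : 0 <= g ^+ N by rewrite exprn_ge0 // (le_trans ler01) ?euler_growth_ge1.
have [e0 Dl0] : 0 <= mxnorm eps /\ 0 <= Dl by rewrite /Dl !(addr_ge0, mxnorm_ge0).
apply: supn_le => [|j]; first by rewrite mulr_ge0 // addr_ge0.
have box i :
    Num.norm (eps i 0 * `|a1 i 0| - eps i 0 * `|a2 i 0|) <= (mxnorm eps + g ^+ N) * Dl.
  rewrite -mulrBr normrM; apply: le_trans (_ : mxnorm eps * Dl <= _); last first.
    by rewrite ler_wpM2r // lerDl.
  apply: ler_pM; rewrite ?normr_ge0 ?le_mxnorm //.
  apply: le_trans (ler_dist_dist _ _) _; have := le_mxnorm (a1 - a2) i 0; rewrite !mxE.
  by move/le_trans; apply; rewrite /Dl lerDr !addr_ge0 ?mxnorm_ge0.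
have free_lip (k : 'I_N) i :
    `|free f1 w1 P1 k.+1 i 0 - free f2 w2 P2 k.+1 i 0| <= (mxnorm eps + g ^+ N) * Dl.
  apply: le_trans (free_response_lipschitz D Mr Er Yr T f1 f2 w1 w2 P1 P2 i (ltn_ord k)) _.
  apply: le_trans (_ : g ^+ N * Dl <= _); last by rewrite ler_wpM2r // lerDr.
  by rewrite ler_wpM2l // /Dl lerDl mxnorm_ge0.
case: j => [[i|i]|[[k i]|[k i]]] /=; rewrite ?box //.
- case: ifP => _; last by rewrite subrr normr0 mulr_ge0 // addr_ge0.
  by rewrite opprB addrC addrA subrK distrC.
- case: ifP => _; last by rewrite subrr normr0 mulr_ge0 // addr_ge0.
  by rewrite opprB addrA subrK.
Qed.

Lemma uhat_star_lipschitz : exists L : R, 0 <= L /\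
  forall (P1 P2 : 'M[R]_(n, N)) (f1 f2 : 'cV[R]_m) (w1 w2 a1 a2 : 'cV[R]_n),
    inA Iu a1 -> inA Iu a2 ->
    mxnorm (uhat_star D Mr Er Yr Iu Iw T c eps Ti wlo whi d P1 f1 w1 a1
            - uhat_star D Mr Er Yr Iu Iw T c eps Ti wlo whi d P2 f2 w2 a2)
    <= L * (mxnorm (P1 - P2) + mxnorm (f1 - f2) + mxnorm (w1 - w2) + mxnorm (a1 - a2)).
Proof.
have [solv [L L0 lip]] :=
  qp_solvable_lipschitz mpc_weights_gt0 mpc_row [set: mpc_cstr] finset.set0.
set C := mxnorm eps + euler_growth D Mr Er Yr T ^+ N.
have C0 : 0 <= C.
  by rewrite addr_ge0 ?mxnorm_ge0 // exprn_ge0 // (le_trans ler01) ?euler_growth_ge1.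
exists (L * C); split=> [|P1 P2 f1 f2 w1 w2 a1 a2 a1A a2A]; first exact: mulr_ge0.
have [z1 O1] := solv _ (mpc_qp_feasible_ex P1 f1 w1 a1).
have [z2 O2] := solv _ (mpc_qp_feasible_ex P2 f2 w2 a2).
rewrite (uhat_star_qp a1A O1) (uhat_star_qp a2A O2) -mulrA.
apply: le_trans (mxnorm_qp_uB z1 z2) (le_trans (lip _ _ _ _ O1 O2) _).
by rewrite ler_wpM2l // mpc_rhs_lipschitz.
Qed.

(* This also covers the default value [0] of [xget] when no optimum exists. *)
Lemma uhat_star_bound (P : 'M[R]_(n, N)) (f0 : 'cV[R]_m) (w0 a0 : 'cV[R]_n) i :
  `|uhat_star D Mr Er Yr Iu Iw T c eps Ti wlo whi d P f0 w0 a0 i 0| <= eps i 0 * `|a0 i 0|.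
Proof.
have eps_a0 : 0 <= eps i 0 * `|a0 i 0| by rewrite mulr_ge0 ?(ltW (Heps i)).
rewrite /uhat_star; case: xgetP => [u _ [F [W [Aa [be [Hf _]]]]]|_]; last first.
  by rewrite mxE normr0.
case: Hf => _ [_ [_ [_ [uA [_ [_ uB]]]]]].
by case: (boolP (i \in Iu)) => [/uB //|iu]; rewrite uA // normr0.
Qed.

End MpcAsQuadraticProgram.

Section Saturation.
Variable R : realType.
Implicit Types x y b e : R.

Lemma sat_id x b : `|x| <= b -> sat x b = x.
Proof. by rewrite ler_norml => /andP[bx xb]; rewrite /sat min_r // max_r. Qed.

Lemma sat_norm_le x b : 0 <= b -> `|sat x b| <= b.
Proof.
move=> b0; rewrite ler_norml /sat le_max lexx ge_max ge_min lexx /= andbT.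
lra.
Qed.

Lemma mul_sat_le x y e : 0 <= e -> x * sat y (e * `|x|) <= e * x ^+ 2.
Proof.
move=> e0; apply: le_trans (ler_norm _) _; rewrite normrM.
apply: le_trans (ler_wpM2l (normr_ge0 x) (sat_norm_le _ (mulr_ge0 e0 (normr_ge0 x)))) _.
by rewrite mulrCA -normrM -expr2 ger0_norm ?sqr_ge0.
Qed.

End Saturation.

Unset Implicit Arguments.

Theorem lemma4p2 (R : realType) (m n N : nat)
  (D : 'M[R]_(m, n)) (Mr Er : 'rV[R]_n) (Yr : 'rV[R]_m)
  (Iu Iw : {set 'I_n}) (T tt d : R) (c eps Ti wlo whi : 'cV[R]_n)
  (* standing assumptions on the network and the parameters *)
  (HDinc : incidence_matrix D) (HDconn : graph_connected D)
  (HM : forall i, 0 < Mr 0 i) (HE : forall i, 0 < Er 0 i)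
  (HY : forall e, 0 < Yr 0 e)
  (HIw : Iw \subset Iu)
  (HT : 0 < T) (Htt : 0 < tt) (HN : (N%:R : R) = (Num.ceil (tt / T))%:~R)
  (Hc : forall i, i \in Iu -> 0 < c i 0)
  (Heps : forall i, 0 < eps i 0)
  (HTi : forall i, i \in Iu -> 0 < Ti i 0)
  (Hd : 0 < d)
  (Hwb : forall i, i \in Iw -> wlo i 0 < whi i 0)
  (* closed-loop trajectory *)
  (Delta : nat -> R) (pf : nat -> R -> 'cV[R]_n) (p : R -> 'cV[R]_n)
  (f : R -> 'cV[R]_m) (w alpha uMPC uhMPC : R -> 'cV[R]_n)
  (HD0 : Delta 0%N = 0) (HDinc' : forall j, Delta j < Delta j.+1)
  (HDunb : forall t : R, exists j, t < Delta j)
  (HuMPC : forall (j : nat) (t : R), Delta j <= t < Delta j.+1 ->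
     uMPC t = uhat_star D Mr Er Yr Iu Iw T c eps Ti wlo whi d
                (forecast_mx N T (Delta j) (pf j))
                (f (Delta j)) (w (Delta j)) (alpha (Delta j)))
  (Huh : forall (t : R) (i : 'I_n),
     uhMPC t i 0 = sat (uMPC t i 0) (eps i 0 * `|alpha t i 0|))
  (Halpha0 : forall (t : R) (i : 'I_n), i \notin Iu -> alpha t i 0 = 0)
  (Halpha : forall i : 'I_n, i \in Iu ->
     solves_ode (fun s => - (alpha s i 0 / Ti i 0) - w s i 0 + uhMPC s i 0)
                (fun s => alpha s i 0))
  (Hf : forall e : 'I_m,
     solves_ode (fun s => (diag_mx Yr *m D *m w s) e 0) (fun s => f s e 0))
  (Hw : forall i : 'I_n,
     solves_ode (fun s => (- (Er 0 i * w s i 0) - (D^T *m f s) i 0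
                           + p s i 0 + alpha s i 0) / Mr 0 i)
                (fun s => w s i 0)) :
  (exists L : R, 0 <= L /\
     forall (P1 P2 : 'M[R]_(n, N)) (f1 f2 : 'cV[R]_m) (w1 w2 a1 a2 : 'cV[R]_n),
       inA Iu a1 -> inA Iu a2 ->
       mxnorm (uhat_star D Mr Er Yr Iu Iw T c eps Ti wlo whi d P1 f1 w1 a1
               - uhat_star D Mr Er Yr Iu Iw T c eps Ti wlo whi d P2 f2 w2 a2)
       <= L * (mxnorm (P1 - P2) + mxnorm (f1 - f2) + mxnorm (w1 - w2)
               + mxnorm (a1 - a2))) /\
  (forall j : nat,
     uhMPC (Delta j) = uhat_star D Mr Er Yr Iu Iw T c eps Ti wlo whi d
                         (forecast_mx N T (Delta j) (pf j))
                         (f (Delta j)) (w (Delta j)) (alpha (Delta j))) /\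
  (forall (t : R) (i : 'I_n), 0 <= t ->
     alpha t i 0 * uhMPC t i 0 <= eps i 0 * alpha t i 0 ^+ 2).
Proof.
split; first exact: uhat_star_lipschitz.
split=> [j|t i _]; last by rewrite Huh mul_sat_le // ltW.
apply/colP => i; rewrite Huh (HuMPC j (Delta j)) ?lexx ?HDinc' //.
exact/sat_id/uhat_star_bound.
Qed.
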